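(* Let $(Q,P)$ be a weakly quasi-lattice ordered group and let $\Lambda$ be a $P$-graph with $\mathrm{FA}(\Lambda)\neq\emptyset$. Let $\mathcal{X}(\Lambda)*P=\{(x,m)\in\mathcal{X}(\Lambda)\times P: x\cap\Lambda^m\neq\emptyset\}$ and define $T:\mathcal{X}(\Lambda)*P\to\mathcal{X}(\Lambda)$ by $T(x,m)=x\cdot m:=\{\mu\in\Lambda: x(0,m)\mu\in x\}$, where $x(0,m)$ is the unique element of $x\cap\Lambda^m$. Then $T$ is well defined with values in $\mathcal{X}(\Lambda)$ and $(\mathcal{X}(\Lambda),P,T)$ is a semigroup action: (S1) for all $x\in\mathcal{X}(\Lambda)$, $(x,e)\in\mathcal{X}(\Lambda)*P$ and $x\cdot e=x$; (S2) for all $x\in\mathcal{X}(\Lambda)$ and $m,n\in P$, $(x,mn)\in\mathcal{X}(\Lambda)*P$ if and only if $(x,m)\in\mathcal{X}(\Lambda)*P$ and $(x\cdot m,n)\in\mathcal{X}(\Lambda)*P$, in which case $(x\cdot m)\cdot n=x\cdot(mn)$.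
   Context: $(Q,P)$ weakly quasi-lattice ordered: $Q$ a discrete group, $P\subseteq Q$ a subsemigroup containing the identity $e$ with $P\cap P^{-1}=\{e\}$, and, with $p\le r$ meaning $pq=r$ for some $q\in P$, any two elements of $P$ with a common upper bound have a least common upper bound. A $P$-graph is a countable small category $\Lambda$ (range/source $r,s$) with a functor $d:\Lambda\to P$ with unique factorisation (if $d(\lambda)=pq$ there are unique $\mu,\nu$ with $\lambda=\mu\nu$, $d(\mu)=p$, $d(\nu)=q$). Write $\Lambda^m=d^{-1}(m)$, $\lambda\Lambda=\{\lambda\mu: s(\lambda)=r(\mu)\}$, $\mu\preceq\lambda$ iff $\lambda\in\mu\Lambda$. $\mathrm{FA}(\Lambda)$ is the set of $\lambda$ such that for all $\mu\in\lambda\Lambda,\nu\in\Lambda$ there is a finite $J\subseteq\Lambda$ with $\mu\Lambda\cap\nu\Lambda=\bigcup_{\kappa\in J}\kappa\Lambda$. A filter is a nonempty hereditary and directed subset of $\Lambda$ (w.r.t. $\preceq$); for a filter $x$, $d|_x$ is injective. The path space is $\mathcal{X}(\Lambda)=\{x: x\text{ a filter}, x\cap\mathrm{FA}(\Lambda)\neq\emptyset\}$. *)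

From Stdlib Require Import List.

Record group := Group {
  gcar :> Type;
  gmul : gcar -> gcar -> gcar;
  gone : gcar;
  ginv : gcar -> gcar;
  gmulA : forall a b c, gmul a (gmul b c) = gmul (gmul a b) c;
  gmul1l : forall a, gmul gone a = a;
  gmul1r : forall a, gmul a gone = a;
  gmulVl : forall a, gmul (ginv a) a = gone;
  gmulVr : forall a, gmul a (ginv a) = gone
}.

Definition pleq (Q : group) (P : Q -> Prop) (p r : Q) : Prop :=
  exists q, P q /\ gmul Q p q = r.

Definition WQLO (Q : group) (P : Q -> Prop) : Prop :=
  P (gone Q) /\
  (forall p q, P p -> P q -> P (gmul Q p q)) /\
  (forall p, P p -> P (ginv Q p) -> p = gone Q) /\
  (forall p q, P p -> P q ->
     (exists r, P r /\ pleq Q P p r /\ pleq Q P q r) ->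
     exists c, P c /\ pleq Q P p c /\ pleq Q P q c /\
       forall b, P b -> pleq Q P p b -> pleq Q P q b -> pleq Q P c b).

(** A countable small category, given by its morphisms; [comp l m] is
    the composite "l m" (defined when [src l = rng m]). *)
Record category := Category {
  Ob : Type;
  Mor : Type;
  src : Mor -> Ob;
  rng : Mor -> Ob;
  idm : Ob -> Mor;
  comp : Mor -> Mor -> Mor;
  src_idm : forall v, src (idm v) = v;
  rng_idm : forall v, rng (idm v) = v;
  rng_comp : forall l m, src l = rng m -> rng (comp l m) = rng l;
  src_comp : forall l m, src l = rng m -> src (comp l m) = src m;
  comp_idl : forall l, comp (idm (rng l)) l = l;
  comp_idr : forall l, comp l (idm (src l)) = l;
  compA : forall l m n, src l = rng m -> src m = rng n ->
            comp l (comp m n) = comp (comp l m) n;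
  Mor_countable : exists f : Mor -> nat, forall a b, f a = f b -> a = b;
  Ob_countable : exists f : Ob -> nat, forall a b, f a = f b -> a = b
}.
Arguments src {c} _.
Arguments rng {c} _.

Record Pgraph (Q : group) (P : Q -> Prop) := PGraph {
  pcat :> category;
  deg : Mor pcat -> Q;
  deg_P : forall l, P (deg l);
  deg_idm : forall v, deg (idm pcat v) = gone Q;
  deg_comp : forall l m, src l = rng m ->
     deg (comp pcat l m) = gmul Q (deg l) (deg m);
  unique_fact : forall l p q, P p -> P q -> deg l = gmul Q p q ->
     exists mu nu, src mu = rng nu /\ l = comp pcat mu nu /\
       deg mu = p /\ deg nu = q /\
       forall mu' nu', src mu' = rng nu' -> l = comp pcat mu' nu' ->
         deg mu' = p -> deg nu' = q -> mu' = mu /\ nu' = nu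
}.

Arguments deg {Q P} _ _.
Arguments pleq : clear implicits.

Section PgraphDefs.
Variables (Q : group) (P : Q -> Prop) (L : Pgraph Q P).

Definition inext (l a : Mor L) : Prop :=
  exists m, src l = rng m /\ a = comp L l m.

Definition preceq (m l : Mor L) : Prop := inext m l.

Definition FA (l : Mor L) : Prop :=
  forall mu nu, inext l mu ->
    exists J : list (Mor L),
      forall a, (inext mu a /\ inext nu a) <-> exists k, In k J /\ inext k a.

Definition is_filter (x : Mor L -> Prop) : Prop :=
  (exists l, x l) /\
  (forall l m, x l -> preceq m l -> x m) /\
  (forall l m, x l -> x m -> exists n, x n /\ preceq l n /\ preceq m n).

Definition pathspace (x : Mor L -> Prop) : Prop :=
  is_filter x /\ exists l, x l /\ FA l.

Definition XstarP (x : Mor L -> Prop) (m : Q) : Prop :=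
  pathspace x /\ P m /\ exists l, x l /\ deg L l = m.

Definition shift (x : Mor L -> Prop) (m : Q) : Mor L -> Prop :=
  fun mu => exists l, x l /\ deg L l = m /\ src l = rng mu /\ x (comp L l mu).

End PgraphDefs.
Arguments inext {Q P} L _ _.
Arguments preceq {Q P} L _ _.
Arguments FA {Q P} L _.
Arguments is_filter {Q P} L _.
Arguments pathspace {Q P} L _.
Arguments XstarP {Q P} L _ _.
Arguments shift {Q P} L _ _ _.

From Stdlib Require Import List Classical.

(* A filter meets each Λ^m at most once: two elements of the same degree
   have a common extension, and unique factorisation of that extension
   identifies them.  Unique factorisation also lets us cancel the common
   prefix x(0,m), so x . m inherits being a filter from x.  FA passes to
   extensions, and from l a to a because a finite generating family of
   l μΛ ∩ l νΛ lies in lΛ and strips to one of μΛ ∩ νΛ; applied to a common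
   extension of x(0,m) and an FA element of x this puts an FA element in
   x . m.  The action laws come from factorising x(0,mn) = x(0,m) x(m,mn). *)

Lemma gmul_cancel_l (Q : group) (a b c : Q) : gmul Q a b = gmul Q a c -> b = c.
Proof.
  intro E.
  rewrite <- (gmul1l Q b), <- (gmul1l Q c), <- (gmulVl Q a), <- !gmulA, E.
  reflexivity.
Qed.

Section PgraphTheory.
Context {Q : group} {P : Q -> Prop} (L : Pgraph Q P).

Lemma factorization_unique (a b a' b' : Mor L) :
  src a = rng b -> src a' = rng b' -> comp L a b = comp L a' b' ->
  deg L a = deg L a' -> deg L b = deg L b' -> a = a' /\ b = b'.
Proof.
  intros Hab Ha'b' E Da Db.
  destruct (unique_fact Q P L (comp L a b) (deg L a) (deg L b)
              (deg_P _ _ L a) (deg_P _ _ L b) (deg_comp _ _ L a b Hab))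
    as [mu [nu [_ [_ [_ [_ U]]]]]].
  destruct (U a b Hab eq_refl eq_refl eq_refl) as [Ea Eb].
  destruct (U a' b' Ha'b' E (eq_sym Da) (eq_sym Db)) as [Ea' Eb'].
  split; congruence.
Qed.

Lemma comp_cancel_l (l a b : Mor L) :
  src l = rng a -> src l = rng b -> comp L l a = comp L l b -> a = b.
Proof.
  intros Ha Hb E.
  apply (factorization_unique l a l b Ha Hb E eq_refl).
  apply (gmul_cancel_l Q (deg L l)).
  rewrite <- (deg_comp _ _ L l a Ha), <- (deg_comp _ _ L l b Hb), E.
  reflexivity.
Qed.

Lemma deg_one_idm (l : Mor L) : deg L l = gone Q -> l = idm L (rng l).
Proof.
  intro Dl.
  refine (proj1 (factorization_unique l (idm L (src l)) (idm L (rng l)) l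
                   _ _ _ _ _)).
  - now rewrite rng_idm.
  - now rewrite src_idm.
  - now rewrite comp_idr, comp_idl.
  - now rewrite deg_idm.
  - now rewrite deg_idm.
Qed.

Lemma preceq_refl (l : Mor L) : preceq L l l.
Proof. exists (idm L (src l)). split; [now rewrite rng_idm | now rewrite comp_idr]. Qed.

Lemma preceq_trans (a b c : Mor L) : preceq L a b -> preceq L b c -> preceq L a c.
Proof.
  intros [d [Hd ->]] [e [He ->]].
  rewrite src_comp in He by exact Hd.
  exists (comp L d e). split.
  - rewrite rng_comp by exact He. exact Hd.
  - symmetry. apply compA; assumption.
Qed.

Lemma rng_preceq (a b : Mor L) : preceq L a b -> rng b = rng a.
Proof. intros [c [Hc ->]]. apply rng_comp. exact Hc. Qed.

Lemma inext_comp_l (l y t : Mor L) :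
  src l = rng y -> inext L y t -> inext L (comp L l y) (comp L l t).
Proof.
  intros Hl [c [Hc ->]]. exists c. split.
  - rewrite src_comp by exact Hl. exact Hc.
  - apply compA; assumption.
Qed.

Lemma inext_comp_lK (l y t : Mor L) :
  src l = rng y -> src l = rng t ->
  inext L (comp L l y) (comp L l t) -> inext L y t.
Proof.
  intros Hy Ht [e [He E]].
  rewrite src_comp in He by exact Hy.
  rewrite <- compA in E by assumption.
  exists e. split; [exact He |].
  apply (comp_cancel_l l); [exact Ht | | exact E].
  rewrite rng_comp by exact He. exact Hy.
Qed.

Lemma FA_inext (l n : Mor L) : FA L l -> inext L l n -> FA L n.
Proof. intros F Hn mu nu Hmu. apply F. exact (preceq_trans _ _ _ Hn Hmu). Qed.

Lemma list_factor_l (l : Mor L) (J : list (Mor L)) :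
  (forall k, In k J -> inext L l k) ->
  exists J', (forall k', In k' J' -> src l = rng k') /\
             (forall k, In k J <-> exists k', In k' J' /\ k = comp L l k').
Proof.
  induction J as [|k J IH]; intro HJ.
  - exists nil. split; [intros _ [] |]. intro k. split; [intros [] | intros [k' [[] _]]].
  - destruct IH as [J' [Hsrc HJ']]; [intros k0 Hk0; apply HJ; right; exact Hk0 |].
    destruct (HJ k (or_introl eq_refl)) as [k' [Hk' Ek]].
    exists (k' :: J'). split.
    + intros k0 [<- | Hk0]; [exact Hk' | exact (Hsrc k0 Hk0)].
    + intro k0. simpl. rewrite HJ'. split.
      * intros [<- | [k1 [Hk1 Ek1]]]; [exists k'; auto | exists k1; auto].
      * intros [k1 [[<- | Hk1] ->]]; [left; exact Ek | right; exists k1; auto].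
Qed.

Lemma FA_comp_r (l a : Mor L) : src l = rng a -> FA L (comp L l a) -> FA L a.
Proof.
  intros Hla F mu nu Hmu.
  assert (Hlmu : src l = rng mu) by (rewrite (rng_preceq _ _ Hmu); exact Hla).
  destruct (classic (src l = rng nu)) as [Hlnu | Hlnu].
  - destruct (F (comp L l mu) (comp L l nu)) as [J HJ];
      [apply inext_comp_l; assumption |].
    destruct (list_factor_l l J) as [J' [Hsrc HJ']].
    { intros k Hk.
      destruct (proj2 (HJ k) (ex_intro _ k (conj Hk (preceq_refl k)))) as [Hk' _].
      exact (preceq_trans _ _ _ (ex_intro _ mu (conj Hlmu eq_refl)) Hk'). }
    exists J'. intro t. split.
    + intros [Ht1 Ht2].
      assert (Hlt : src l = rng t) by (rewrite (rng_preceq _ _ Ht1); exact Hlmu).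
      destruct (proj1 (HJ (comp L l t))) as [k [Hk Hkt]];
        [split; apply inext_comp_l; assumption |].
      destruct (proj1 (HJ' k) Hk) as [k' [Hk' ->]].
      exists k'. split; [exact Hk' |]. apply (inext_comp_lK l); auto.
    + intros [k' [Hk' Ht]].
      assert (Hlt : src l = rng t) by (rewrite (rng_preceq _ _ Ht); exact (Hsrc k' Hk')).
      destruct (proj2 (HJ (comp L l t))) as [Ht1 Ht2].
      { exists (comp L l k'). split.
        - apply HJ'. exists k'. auto.
        - apply inext_comp_l; auto. }
      split; apply (inext_comp_lK l); assumption.
  - (* Then no t lies in both mu Λ and nu Λ, as rng t would be src l and rng nu. *)
    exists nil. intro t. split.
    + intros [Ht1 Ht2]. exfalso. apply Hlnu.
      rewrite Hlmu, <- (rng_preceq _ _ Ht1), (rng_preceq _ _ Ht2). reflexivity.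
    + intros [k [[] _]].
Qed.

Section Filter.
Variable x : Mor L -> Prop.
Hypothesis Hx : is_filter L x.

Lemma filter_prefix (a b : Mor L) : src a = rng b -> x (comp L a b) -> x a.
Proof.
  intros Hab Hx_ab. apply (proj1 (proj2 Hx) (comp L a b)); [exact Hx_ab |].
  exists b. auto.
Qed.

Lemma filter_idm (l : Mor L) : x l -> x (idm L (rng l)).
Proof.
  intro Hl. apply (filter_prefix (idm L (rng l)) l); [apply src_idm |].
  rewrite comp_idl. exact Hl.
Qed.

Lemma filter_deg_inj (l l' : Mor L) : x l -> x l' -> deg L l = deg L l' -> l = l'.
Proof.
  intros Hl Hl' D.
  destruct (proj2 (proj2 Hx) l l' Hl Hl') as [n [_ [[a [Ha ->]] [a' [Ha' E]]]]].
  apply (factorization_unique l a l' a' Ha Ha' E D).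
  apply (gmul_cancel_l Q (deg L l)).
  rewrite <- (deg_comp _ _ L l a Ha), D, <- (deg_comp _ _ L l' a' Ha'), E.
  reflexivity.
Qed.

Lemma filter_factor (lam : Mor L) (m n : Q) :
  P m -> P n -> x lam -> deg L lam = gmul Q m n ->
  exists a b, src a = rng b /\ lam = comp L a b /\
              deg L a = m /\ deg L b = n /\ x a.
Proof.
  intros Pm Pn Hlam Dlam.
  destruct (unique_fact Q P L lam m n Pm Pn Dlam) as [a [b [Hab [E [Da [Db _]]]]]].
  exists a, b. repeat split; try assumption.
  apply (filter_prefix a b Hab). rewrite <- E. exact Hlam.
Qed.

Lemma shift_is_filter (l : Mor L) (m : Q) :
  x l -> deg L l = m -> is_filter L (shift L x m).
Proof.
  intros Hl Dl. split; [| split].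
  - exists (idm L (src l)), l. repeat split; try assumption.
    + now rewrite rng_idm.
    + now rewrite comp_idr.
  - intros mu nu [l1 [Hl1 [D1 [S1 X1]]]] Hnu.
    assert (S1' : src l1 = rng nu) by (rewrite S1; apply rng_preceq; exact Hnu).
    exists l1. repeat split; try assumption.
    apply (proj1 (proj2 Hx) (comp L l1 mu)); [exact X1 |].
    apply inext_comp_l; assumption.
  - intros mu mu' [l1 [Hl1 [D1 [S1 X1]]]] [l2 [Hl2 [D2 [S2 X2]]]].
    assert (E : l2 = l1) by (apply filter_deg_inj; congruence). subst l2.
    destruct (proj2 (proj2 Hx) _ _ X1 X2) as [n [Hn [[c [Hc En]] Hn']]].
    rewrite src_comp in Hc by exact S1.
    assert (S : src l1 = rng (comp L mu c)) by (rewrite rng_comp by exact Hc; exact S1).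
    assert (E : comp L l1 (comp L mu c) = n) by (rewrite En; apply compA; assumption).
    exists (comp L mu c). split; [| split].
    + exists l1. rewrite E. auto.
    + exists c. auto.
    + apply (inext_comp_lK l1); [exact S2 | exact S |]. rewrite E. exact Hn'.
Qed.

Lemma shift_FA (l lam : Mor L) (m : Q) :
  x l -> deg L l = m -> x lam -> FA L lam -> exists mu, shift L x m mu /\ FA L mu.
Proof.
  intros Hl Dl Hlam Flam.
  destruct (proj2 (proj2 Hx) lam l Hlam Hl) as [n [Hn [Hlam_n [a [Ha En]]]]].
  exists a. split.
  - exists l. rewrite <- En. auto.
  - apply (FA_comp_r l a Ha). rewrite <- En. exact (FA_inext lam n Flam Hlam_n).
Qed.

Lemma shift_one (mu : Mor L) : shift L x (gone Q) mu <-> x mu.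
Proof.
  split.
  - intros [l [_ [Dl [Sl Xl]]]].
    rewrite (deg_one_idm l Dl), src_idm in Sl.
    rewrite (deg_one_idm l Dl), Sl, comp_idl in Xl. exact Xl.
  - intro Hmu. exists (idm L (rng mu)). repeat split.
    + exact (filter_idm mu Hmu).
    + apply deg_idm.
    + apply src_idm.
    + rewrite comp_idl. exact Hmu.
Qed.

Lemma shift_shift (m n : Q) (mu : Mor L) : P m -> P n ->
  shift L (shift L x m) n mu <-> shift L x (gmul Q m n) mu.
Proof.
  intros Pm Pn. split.
  - intros [b [[a [Ha [Da [Sab Xab]]]] [Db [Sb [a' [Ha' [Da' [Sa' Xa']]]]]]]].
    rewrite rng_comp in Sa' by exact Sb.
    exists (comp L a' b). repeat split.
    + apply (filter_prefix (comp L a' b) mu); [now rewrite src_comp |].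
      rewrite <- compA by assumption. exact Xa'.
    + rewrite deg_comp by exact Sa'. congruence.
    + rewrite src_comp by exact Sa'. exact Sb.
    + rewrite <- compA by assumption. exact Xa'.
  - intros [lam [Hlam [Dlam [Sl Xl]]]].
    destruct (filter_factor lam m n Pm Pn Hlam Dlam) as [a [b [Sab [-> [Da [Db Ha]]]]]].
    rewrite src_comp in Sl by exact Sab.
    exists b. split; [| split; [exact Db | split; [exact Sl |]]].
    + exists a. auto.
    + exists a. repeat split; try assumption.
      * rewrite rng_comp by exact Sl. exact Sab.
      * rewrite compA by assumption. exact Xl.
Qed.

End Filter.

Lemma XstarP_unique (x : Mor L -> Prop) (m : Q) : XstarP L x m ->
  exists l, x l /\ deg L l = m /\ forall l', x l' -> deg L l' = m -> l' = l.
Proof.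
  intros [[Hx _] [_ [l [Hl Dl]]]].
  exists l. repeat split; try assumption.
  intros l' Hl' Dl'. apply (filter_deg_inj x Hx); congruence.
Qed.

Lemma shift_pathspace (x : Mor L -> Prop) (m : Q) :
  XstarP L x m -> pathspace L (shift L x m).
Proof.
  intros [[Hx [lam [Hlam Flam]]] [_ [l [Hl Dl]]]].
  split.
  - exact (shift_is_filter x Hx l m Hl Dl).
  - exact (shift_FA x Hx l lam m Hl Dl Hlam Flam).
Qed.

Lemma XstarP_one (x : Mor L -> Prop) : pathspace L x -> XstarP L x (gone Q).
Proof.
  intro Hx. destruct (proj1 (proj1 Hx)) as [l Hl].
  split; [exact Hx | split].
  - rewrite <- (deg_idm _ _ L (rng l)). apply deg_P.
  - exists (idm L (rng l)). split; [exact (filter_idm x (proj1 Hx) l Hl) | apply deg_idm].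
Qed.

Lemma XstarP_mul (x : Mor L -> Prop) (m n : Q) : pathspace L x -> P m -> P n ->
  XstarP L x (gmul Q m n) <-> XstarP L x m /\ XstarP L (shift L x m) n.
Proof.
  intros Hx Pm Pn. split.
  - intros [_ [_ [lam [Hlam Dlam]]]].
    destruct (filter_factor x (proj1 Hx) lam m n Pm Pn Hlam Dlam)
      as [a [b [Sab [-> [Da [Db Ha]]]]]].
    assert (Xm : XstarP L x m)
      by (split; [exact Hx | split; [exact Pm | exists a; auto]]).
    split; [exact Xm |].
    split; [exact (shift_pathspace x m Xm) | split; [exact Pn |]].
    exists b. split; [| exact Db]. exists a. auto.
  - intros [_ [_ [_ [b [[a [_ [Da [Sab Xab]]]] Db]]]]].
    split; [exact Hx | split].
    + rewrite <- Da, <- Db, <- (deg_comp _ _ L a b Sab). apply deg_P.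
    + exists (comp L a b). split; [exact Xab |].
      rewrite deg_comp by exact Sab. congruence.
Qed.

End PgraphTheory.

Theorem proposition5p9 (Q : group) (P : Q -> Prop) (L : Pgraph Q P) :
  WQLO Q P ->
  (exists l, FA L l) ->
  (* T is well defined with values in X(Λ) *)
  (forall x m, XstarP L x m ->
     (exists l, x l /\ deg L l = m /\
        forall l', x l' -> deg L l' = m -> l' = l) /\
     pathspace L (shift L x m)) /\
  (* (S1) *)
  (forall x, pathspace L x ->
     XstarP L x (gone Q) /\ (forall mu, shift L x (gone Q) mu <-> x mu)) /\
  (* (S2) *)
  (forall x m n, pathspace L x -> P m -> P n ->
     (XstarP L x (gmul Q m n) <->
        XstarP L x m /\ XstarP L (shift L x m) n) /\
     (XstarP L x (gmul Q m n) ->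
        forall mu, shift L (shift L x m) n mu <-> shift L x (gmul Q m n) mu)).
Proof.
  intros _ _. split; [| split].
  - intros x m Hxm. exact (conj (XstarP_unique L x m Hxm) (shift_pathspace L x m Hxm)).
  - intros x Hx. exact (conj (XstarP_one L x Hx) (shift_one L x (proj1 Hx))).
  - intros x m n Hx Pm Pn. split.
    + exact (XstarP_mul L x m n Hx Pm Pn).
    + intros _ mu. exact (shift_shift L x (proj1 Hx) m n mu Pm Pn).
Qed.
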